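(* Let $n\geq1$. The submonoid $\Sigma_n$ of $\mathcal{B}_{n+1}$ is an Ore monoid, and its group of fractions is isomorphic to $\mathcal{B}_{n+1}$ (via the map induced by the inclusion $\Sigma_n\subseteq\mathcal{B}_{n+1}$).
   Context: $\mathcal{B}_{n+1}$ is the braid group on $n+1$ strands with standard Artin generators $\sigma_1,\dots,\sigma_n$; $\Sigma_n$ is its submonoid generated by $\sigma_1,\ \sigma_1\sigma_2,\ \dots,\ \sigma_1\sigma_2\cdots\sigma_n$. An Ore monoid is a monoid that is left- and right-cancellative and in which any two elements admit a common left-multiple (an element $a'a=b'b$). *)

(* The braid group B_{n+1} is presented by generators
   sigma_1..sigma_n; its elements are represented by words modulo the
   congruence generated by free reduction and the Artin relations. *)
From Stdlib Require Import List Arith.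
Import ListNotations.

(* A letter (i, true) is sigma_i, (i, false) is sigma_i^{-1}. *)
Definition letter := (nat * bool)%type.
Definition word := list letter.

Definition valid (n : nat) (w : word) : Prop :=
  Forall (fun l => 1 <= fst l <= n) w.

Definition sig (i : nat) : letter := (i, true).

Inductive braid_eq (n : nat) : word -> word -> Prop :=
| be_refl : forall w, braid_eq n w w
| be_sym : forall u v, braid_eq n u v -> braid_eq n v u
| be_trans : forall u v w, braid_eq n u v -> braid_eq n v w -> braid_eq n u w
| be_ctx : forall u v w1 w2, braid_eq n w1 w2 ->
    braid_eq n (u ++ w1 ++ v) (u ++ w2 ++ v)
| be_free : forall i b, 1 <= i <= n ->
    braid_eq n [(i, b); (i, negb b)] []
| be_comm : forall i j, 1 <= i <= n -> 1 <= j <= n -> i + 2 <= j ->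
    braid_eq n [sig i; sig j] [sig j; sig i]
| be_braid : forall i, 1 <= i -> i + 1 <= n ->
    braid_eq n [sig i; sig (i+1); sig i] [sig (i+1); sig i; sig (i+1)].

Definition delta (k : nat) : word := map sig (seq 1 k).

Definition in_Sigma (n : nat) (w : word) : Prop :=
  exists ks : list nat, Forall (fun k => 1 <= k <= n) ks /\
    braid_eq n w (concat (map delta ks)).

Definition Sigma_is_Ore (n : nat) : Prop :=
  (forall a b c, in_Sigma n a -> in_Sigma n b -> in_Sigma n c ->
     braid_eq n (c ++ a) (c ++ b) -> braid_eq n a b) /\
  (forall a b c, in_Sigma n a -> in_Sigma n b -> in_Sigma n c ->
     braid_eq n (a ++ c) (b ++ c) -> braid_eq n a b) /\
  (forall a b, in_Sigma n a -> in_Sigma n b ->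
     exists a' b', in_Sigma n a' /\ in_Sigma n b' /\
       braid_eq n (a' ++ a) (b' ++ b)).

Record group := Group {
  gcar :> Type;
  gmul : gcar -> gcar -> gcar;
  gone : gcar;
  ginv : gcar -> gcar;
  gmulA : forall x y z, gmul x (gmul y z) = gmul (gmul x y) z;
  gmul1 : forall x, gmul gone x = x;
  gmulV : forall x, gmul (ginv x) x = gone
}.

Definition Sigma_hom (n : nat) (H : group) (f : word -> H) : Prop :=
  (forall a b, in_Sigma n a -> in_Sigma n b -> braid_eq n a b -> f a = f b) /\
  f [] = gone H /\
  (forall a b, in_Sigma n a -> in_Sigma n b -> f (a ++ b) = gmul H (f a) (f b)).

Definition braid_hom (n : nat) (H : group) (g : word -> H) : Prop :=
  (forall u v, valid n u -> valid n v -> braid_eq n u v -> g u = g v) /\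
  (forall u v, valid n u -> valid n v -> g (u ++ v) = gmul H (g u) (g v)).

(* The inclusion Sigma_n -> B_{n+1} exhibits B_{n+1} as the group of fractions
   (enveloping group) of Sigma_n: universal property. *)
Definition inclusion_is_group_of_fractions (n : nat) : Prop :=
  forall (H : group) (f : word -> H), Sigma_hom n H f ->
    (exists g, braid_hom n H g /\ forall a, in_Sigma n a -> g a = f a) /\
    (forall g1 g2, braid_hom n H g1 -> braid_hom n H g2 ->
       (forall a, in_Sigma n a -> g1 a = f a) ->
       (forall a, in_Sigma n a -> g2 a = f a) ->
       forall u, valid n u -> g1 u = g2 u).

(** The monoid Σ_n is generated by δ_k = σ_1⋯σ_k, which satisfy
    δ_1 δ_j δ_i = δ_(i+1) δ_j for i < j.  The element δ_n^(n+1) is the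
    (central) full twist, and each δ_k is a right divisor of it inside Σ_n;
    hence every element of Σ_n has a left multiple in Σ_n which is a power of
    the full twist, and two such powers always have a common left multiple.
    Cancellativity is inherited from the ambient group B_(n+1).  For the
    universal property, σ_i = δ_(i-1)^-1 δ_i forces the extension of a
    homomorphism f on Σ_n, and the braid relations for the images
    f(δ_(i-1))^-1 f(δ_i) follow from the relation above, which holds in Σ_n. *)

From Stdlib Require Import List Arith Lia Setoid Morphisms Bool.
Import ListNotations.

Lemma delta_S k : delta (S k) = delta k ++ [sig (S k)].
Proof. unfold delta. rewrite seq_S, map_app. reflexivity. Qed.

Lemma Forall_seq (P : nat -> Prop) a m :
  (forall x, a <= x < a + m -> P x) -> Forall P (seq a m).
Proof. intro H. apply Forall_forall. intros x Hx. apply in_seq in Hx. apply H; lia. Qed.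

Fixpoint wpow (w : word) (m : nat) : word :=
  match m with 0 => [] | S m => w ++ wpow w m end.

Lemma wpow_add w a b : wpow w (a + b) = wpow w a ++ wpow w b.
Proof. induction a as [|a IH]; simpl; auto. rewrite IH, app_assoc. reflexivity. Qed.

Lemma wpow_S_r w m : wpow w m ++ w = wpow w (S m).
Proof. rewrite <- Nat.add_1_r, wpow_add. simpl. rewrite app_nil_r. reflexivity. Qed.

Definition inv_word (w : word) : word := rev (map (fun l => (fst l, negb (snd l))) w).

Lemma inv_word_cons i b w : inv_word ((i, b) :: w) = inv_word w ++ [(i, negb b)].
Proof. reflexivity. Qed.

Section Braid.
Variable n : nat.

Instance braid_eq_equiv : Equivalence (braid_eq n).
Proof. split; red; [apply be_refl | apply be_sym | apply be_trans]. Qed.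

Lemma braid_eq_appr w1 w2 v : braid_eq n w1 w2 -> braid_eq n (w1 ++ v) (w2 ++ v).
Proof. exact (be_ctx n [] v w1 w2). Qed.

Lemma braid_eq_appl u w1 w2 : braid_eq n w1 w2 -> braid_eq n (u ++ w1) (u ++ w2).
Proof. intro H. pose proof (be_ctx n u [] w1 w2 H) as H'. rewrite !app_nil_r in H'. exact H'. Qed.

Instance app_braid_eq_proper :
  Proper (braid_eq n ==> braid_eq n ==> braid_eq n) (@app letter).
Proof.
  intros u u' Hu v v' Hv. transitivity (u' ++ v).
  - apply braid_eq_appr; exact Hu.
  - apply braid_eq_appl; exact Hv.
Qed.

Instance cons_braid_eq_proper l : Proper (braid_eq n ==> braid_eq n) (cons l).
Proof. intros u v H. apply (braid_eq_appl [l]); exact H. Qed.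

Lemma valid_app u v : valid n u -> valid n v -> valid n (u ++ v).
Proof. intros; apply Forall_app; split; assumption. Qed.

Lemma valid_delta k : k <= n -> valid n (delta k).
Proof. intro. apply Forall_map, Forall_seq. intros; simpl; lia. Qed.

Lemma valid_deltas ks : Forall (fun k => 1 <= k <= n) ks -> valid n (concat (map delta ks)).
Proof.
  induction 1 as [|k ks Hk _ IH]; simpl; [constructor|].
  apply valid_app; [apply valid_delta; lia | exact IH].
Qed.

Lemma inv_word_l w : valid n w -> braid_eq n (inv_word w ++ w) [].
Proof.
  induction w as [|[i b] w IH]; intros V. { reflexivity. }
  inversion V as [|? ? Hi Vw]; subst; simpl in Hi.
  rewrite inv_word_cons, <- app_assoc. simpl.
  change ((i, negb b) :: (i, b) :: w) with ([(i, negb b); (i, b)] ++ w).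
  assert (Hfree : braid_eq n [(i, negb b); (i, b)] []).
  { destruct b; apply (be_free n i); lia. }
  rewrite Hfree. exact (IH Vw).
Qed.

Lemma inv_word_r w : valid n w -> braid_eq n (w ++ inv_word w) [].
Proof.
  induction w as [|[i b] w IH]; intros V. { reflexivity. }
  inversion V as [|? ? Hi Vw]; subst; simpl in Hi.
  rewrite inv_word_cons.
  change (((i, b) :: w) ++ inv_word w ++ [(i, negb b)])
    with ([(i, b)] ++ w ++ inv_word w ++ [(i, negb b)]).
  rewrite (app_assoc w), (IH Vw). apply be_free. exact Hi.
Qed.

Lemma braid_eq_cancel_l c a b :
  valid n c -> braid_eq n (c ++ a) (c ++ b) -> braid_eq n a b.
Proof.
  intros Vc H.
  transitivity (inv_word c ++ c ++ a).
  { rewrite app_assoc, inv_word_l by exact Vc. reflexivity. }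
  rewrite H, app_assoc, inv_word_l by exact Vc. reflexivity.
Qed.

Lemma braid_eq_cancel_r c a b :
  valid n c -> braid_eq n (a ++ c) (b ++ c) -> braid_eq n a b.
Proof.
  intros Vc H.
  transitivity ((a ++ c) ++ inv_word c).
  { rewrite <- app_assoc, inv_word_r by exact Vc. rewrite app_nil_r. reflexivity. }
  rewrite H, <- app_assoc, inv_word_r by exact Vc. rewrite app_nil_r. reflexivity.
Qed.

Lemma in_Sigma_nil : in_Sigma n [].
Proof. exists []. split; [constructor | reflexivity]. Qed.

Lemma in_Sigma_app a b : in_Sigma n a -> in_Sigma n b -> in_Sigma n (a ++ b).
Proof.
  intros [ka [Fa Ea]] [kb [Fb Eb]]. exists (ka ++ kb). split.
  - apply Forall_app; auto.
  - rewrite map_app, concat_app, Ea, Eb. reflexivity.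
Qed.

Lemma in_Sigma_delta k : k <= n -> in_Sigma n (delta k).
Proof.
  intro Hk. destruct k as [|k]. { apply in_Sigma_nil. }
  exists [S k]. split.
  - constructor; [lia | constructor].
  - simpl. rewrite app_nil_r. reflexivity.
Qed.

Lemma in_Sigma_deltas ks : Forall (fun k => 1 <= k <= n) ks -> in_Sigma n (concat (map delta ks)).
Proof. intro F. exists ks. split; [exact F | reflexivity]. Qed.

Lemma in_Sigma_wpow w m : in_Sigma n w -> in_Sigma n (wpow w m).
Proof.
  intro Hw. induction m as [|m IH]; simpl; [apply in_Sigma_nil | apply in_Sigma_app; auto].
Qed.

Lemma in_Sigma_valid_repr a : in_Sigma n a -> exists c, valid n c /\ braid_eq n a c.
Proof. intros [ks [F E]]. exists (concat (map delta ks)). split; [apply valid_deltas|]; assumption. Qed.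

Lemma sigs_sig_comm l j : 1 <= j <= n -> Forall (fun x => 1 <= x /\ x + 2 <= j) l ->
  braid_eq n (map sig l ++ [sig j]) ([sig j] ++ map sig l).
Proof.
  intros Hj. induction 1 as [|x l Hx _ IH]; simpl. { reflexivity. }
  change (sig x :: map sig l ++ [sig j]) with ([sig x] ++ (map sig l ++ [sig j])).
  rewrite IH.
  apply (braid_eq_appr [sig x; sig j] [sig j; sig x]). apply be_comm; lia.
Qed.

Lemma delta_sig_shift j k : 1 <= k -> k < j -> j <= n ->
  braid_eq n (delta j ++ [sig k]) ([sig (S k)] ++ delta j).
Proof.
  revert k. induction j as [|j IH]; intros k Hk Hkj Hj. { lia. }
  rewrite delta_S.
  destruct (Nat.eq_dec k j) as [->|Hne].
  - destruct j as [|p]. { lia. }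
    rewrite delta_S, <- !app_assoc. simpl.
    transitivity (delta p ++ [sig (S (S p)); sig (S p); sig (S (S p))]).
    { apply braid_eq_appl. pose proof (be_braid n (S p)) as B.
      rewrite Nat.add_1_r in B. apply B; lia. }
    change [sig (S (S p)); sig (S p); sig (S (S p))]
      with ([sig (S (S p))] ++ [sig (S p); sig (S (S p))]).
    change (sig (S (S p)) :: delta p ++ [sig (S p); sig (S (S p))])
      with ([sig (S (S p))] ++ delta p ++ [sig (S p); sig (S (S p))]).
    rewrite !app_assoc. apply braid_eq_appr. apply sigs_sig_comm. { lia. }
    apply Forall_seq. intros; lia.
  - rewrite <- app_assoc.
    transitivity (delta j ++ [sig k] ++ [sig (S j)]).
    { apply braid_eq_appl. symmetry. apply be_comm; lia. }
    rewrite app_assoc, IH by lia. rewrite <- app_assoc. reflexivity.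
Qed.

Lemma delta_sigs_shift m a j : 1 <= a -> a + m <= j -> j <= n ->
  braid_eq n (delta j ++ map sig (seq a m)) (map sig (seq (S a) m) ++ delta j).
Proof.
  revert a. induction m as [|m IH]; intros a Ha Hm Hj; simpl.
  { rewrite app_nil_r. reflexivity. }
  change (sig a :: map sig (seq (S a) m)) with ([sig a] ++ map sig (seq (S a) m)).
  rewrite app_assoc, delta_sig_shift by lia. simpl. rewrite IH by lia. reflexivity.
Qed.

Lemma delta_rel i j : i < j -> j <= n ->
  braid_eq n (delta 1 ++ delta j ++ delta i) (delta (S i) ++ delta j).
Proof. intros. unfold delta at 3. rewrite delta_sigs_shift by lia. reflexivity. Qed.

Lemma delta_pow_sig_shift t k : 1 <= k -> k + t <= n ->
  braid_eq n (wpow (delta n) t ++ [sig k]) ([sig (k + t)] ++ wpow (delta n) t).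
Proof.
  revert k. induction t as [|t IH]; intros k Hk Ht; simpl.
  { rewrite Nat.add_0_r. reflexivity. }
  rewrite <- app_assoc, IH by lia. rewrite app_assoc, delta_sig_shift by lia.
  rewrite Nat.add_succ_r. reflexivity.
Qed.

Hypothesis n_pos : 1 <= n.

Lemma delta_sq_sig_top :
  braid_eq n (wpow (delta n) 2 ++ [sig n]) ([sig 1] ++ wpow (delta n) 2).
Proof.
  simpl. rewrite app_nil_r.
  destruct n as [|p] eqn:En. { lia. }
  rewrite <- En. symmetry.
  assert (Hsplit : delta n = delta p ++ [sig n]) by (rewrite En; apply delta_S).
  assert (Hhead : sig 1 :: map sig (seq 2 p) = delta n) by (rewrite En; reflexivity).
  rewrite Hsplit at 2. rewrite (app_assoc (delta n) (delta p)).
  rewrite (delta_sigs_shift p 1 n) by lia.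
  rewrite <- !app_assoc, app_comm_cons, Hhead. reflexivity.
Qed.

(* δ_n^(n+1) = Δ^2, the square of Garside's fundamental braid. *)
Definition full_twist : word := wpow (delta n) (S n).

Lemma full_twist_sig_comm k : 1 <= k <= n ->
  braid_eq n (full_twist ++ [sig k]) ([sig k] ++ full_twist).
Proof.
  intros Hk. unfold full_twist.
  replace (S n) with ((k - 1 + 2) + (n - k)) by lia.
  rewrite !wpow_add, <- !app_assoc.
  rewrite (delta_pow_sig_shift (n - k) k) by lia. replace (k + (n - k)) with n by lia.
  rewrite (app_assoc (wpow (delta n) 2)), delta_sq_sig_top.
  rewrite <- app_assoc, (app_assoc (wpow (delta n) (k - 1))), delta_pow_sig_shift by lia.
  replace (1 + (k - 1)) with k by lia. rewrite <- !app_assoc. reflexivity.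
Qed.

Lemma full_twist_comm_app u v :
  braid_eq n (full_twist ++ u) (u ++ full_twist) ->
  braid_eq n (full_twist ++ v) (v ++ full_twist) ->
  braid_eq n (full_twist ++ u ++ v) ((u ++ v) ++ full_twist).
Proof.
  intros Hu Hv. rewrite app_assoc, Hu, <- app_assoc, Hv, app_assoc. reflexivity.
Qed.

Lemma full_twist_delta_comm k : k <= n ->
  braid_eq n (full_twist ++ delta k) (delta k ++ full_twist).
Proof.
  induction k as [|k IH]; intros Hk.
  { simpl. rewrite app_nil_r. reflexivity. }
  rewrite delta_S. apply full_twist_comm_app. { apply IH; lia. }
  apply full_twist_sig_comm. lia.
Qed.

Lemma full_twist_deltas_comm ks : Forall (fun k => 1 <= k <= n) ks ->
  braid_eq n (full_twist ++ concat (map delta ks)) (concat (map delta ks) ++ full_twist).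
Proof.
  induction 1 as [|k ks Hk _ IH]; simpl.
  - rewrite app_nil_r. reflexivity.
  - apply full_twist_comm_app; [apply full_twist_delta_comm; lia | exact IH].
Qed.

Lemma in_Sigma_full_twist : in_Sigma n full_twist.
Proof. apply in_Sigma_wpow, in_Sigma_delta. lia. Qed.

Lemma delta_right_divides_delta_pow t : t < n -> exists y, in_Sigma n y /\
  braid_eq n (y ++ delta (n - t)) (wpow (delta n) (S t)).
Proof.
  induction t as [|t IH]; intros Ht.
  - exists []. split; [apply in_Sigma_nil|].
    simpl. rewrite Nat.sub_0_r, app_nil_r. reflexivity.
  - destruct IH as [y [Hy E]]. { lia. }
    exists (y ++ delta 1 ++ delta n). split.
    { apply in_Sigma_app; [exact Hy|]. apply in_Sigma_app; apply in_Sigma_delta; lia. }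
    rewrite <- !app_assoc, delta_rel by lia.
    replace (S (n - S t)) with (n - t) by lia.
    rewrite app_assoc, E, wpow_S_r. reflexivity.
Qed.

Lemma delta_right_divides_full_twist k : 1 <= k <= n -> exists y, in_Sigma n y /\
  braid_eq n (y ++ delta k) full_twist.
Proof.
  intros Hk. destruct (delta_right_divides_delta_pow (n - k)) as [y [Hy E]]. { lia. }
  replace (n - (n - k)) with k in E by lia.
  exists (wpow (delta n) k ++ y). split.
  { apply in_Sigma_app; [apply in_Sigma_wpow, in_Sigma_delta; lia | exact Hy]. }
  rewrite <- app_assoc, E, <- wpow_add. unfold full_twist.
  replace (k + S (n - k)) with (S n) by lia. reflexivity.
Qed.

Lemma in_Sigma_left_multiple_full_twist a : in_Sigma n a ->
  exists a' m, in_Sigma n a' /\ braid_eq n (a' ++ a) (wpow full_twist m).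
Proof.
  intros [ks [F E]]. setoid_rewrite E. clear E.
  induction F as [|k ks Hk Fks IH]; simpl.
  - exists [], 0. split; [apply in_Sigma_nil | reflexivity].
  - destruct IH as [c [m [Hc Em]]].
    destruct (delta_right_divides_full_twist k Hk) as [y [Hy Ey]].
    exists (c ++ y), (S m). split; [apply in_Sigma_app; assumption|].
    rewrite <- app_assoc, (app_assoc y), Ey, full_twist_deltas_comm by exact Fks.
    rewrite app_assoc, Em, wpow_S_r. reflexivity.
Qed.

Lemma Sigma_common_left_multiple a b : in_Sigma n a -> in_Sigma n b ->
  exists a' b', in_Sigma n a' /\ in_Sigma n b' /\ braid_eq n (a' ++ a) (b' ++ b).
Proof.
  intros Ha Hb.
  destruct (in_Sigma_left_multiple_full_twist a Ha) as [a1 [p [Ha1 Ep]]].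
  destruct (in_Sigma_left_multiple_full_twist b Hb) as [b1 [q [Hb1 Eq]]].
  exists (wpow full_twist q ++ a1), (wpow full_twist p ++ b1).
  split; [|split].
  - apply in_Sigma_app; [apply in_Sigma_wpow, in_Sigma_full_twist | exact Ha1].
  - apply in_Sigma_app; [apply in_Sigma_wpow, in_Sigma_full_twist | exact Hb1].
  - rewrite <- !app_assoc, Ep, Eq, <- !wpow_add, Nat.add_comm. reflexivity.
Qed.

Lemma Sigma_Ore : Sigma_is_Ore n.
Proof.
  split; [|split].
  - intros a b c _ _ Hc H. destruct (in_Sigma_valid_repr c Hc) as [c' [Vc Ec]].
    apply (braid_eq_cancel_l c'); [exact Vc|]. rewrite <- Ec. exact H.
  - intros a b c _ _ Hc H. destruct (in_Sigma_valid_repr c Hc) as [c' [Vc Ec]].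
    apply (braid_eq_cancel_r c'); [exact Vc|]. rewrite <- Ec. exact H.
  - exact Sigma_common_left_multiple.
Qed.

End Braid.

Section GroupTheory.
Variable H : group.
Local Notation "x * y" := (gmul H x y).
Local Notation "x ^-1" := (ginv H x) (at level 3).

Lemma mulgV x : x * x^-1 = gone H.
Proof.
  rewrite <- (gmul1 H (x * x^-1)), <- (gmulV H (x^-1)) at 1.
  rewrite <- gmulA, (gmulA H (x^-1)), gmulV, gmul1. apply gmulV.
Qed.

Lemma mulg1 x : x * gone H = x.
Proof. rewrite <- (gmulV H x), gmulA, mulgV. apply gmul1. Qed.

Lemma mulKg x y : x^-1 * (x * y) = y.
Proof. rewrite gmulA, gmulV. apply gmul1. Qed.

Lemma mulKVg x y : x * (x^-1 * y) = y.
Proof. rewrite gmulA, mulgV. apply gmul1. Qed.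

Lemma mulgI x y z : x * y = x * z -> y = z.
Proof. intro E. rewrite <- (mulKg x y), E. apply mulKg. Qed.

Lemma mulIg x y z : y * x = z * x -> y = z.
Proof.
  intro E. rewrite <- (mulg1 y), <- (mulgV x), gmulA, E, <- gmulA, mulgV. apply mulg1.
Qed.

Lemma invMg x y : (x * y)^-1 = y^-1 * x^-1.
Proof.
  apply (mulgI (x * y)). rewrite mulgV, <- gmulA, (gmulA H y), mulgV, gmul1, mulgV.
  reflexivity.
Qed.

Lemma invgK x : (x^-1)^-1 = x.
Proof. apply (mulgI (x^-1)). rewrite mulgV. symmetry. apply gmulV. Qed.

Lemma mulg_eq1_inv x y : x * y = gone H -> x = y^-1.
Proof. intro E. apply (mulIg y). rewrite gmulV. exact E. Qed.

End GroupTheory.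

Section Extension.
Variables (n : nat) (H : group) (f : word -> H).
Hypothesis f_hom : Sigma_hom n H f.
Local Notation "x * y" := (gmul H x y).
Local Notation "x ^-1" := (ginv H x) (at level 3).

Let fdelta k := f (delta k).

(* The only possible image of σ_i, since σ_i = δ_(i-1)^-1 δ_i. *)
Definition fsigma i : H := (f (delta (i - 1)))^-1 * f (delta i).

Lemma fdelta0 : fdelta 0 = gone H.
Proof. apply f_hom. Qed.

Lemma f_app a b : in_Sigma n a -> in_Sigma n b -> f (a ++ b) = f a * f b.
Proof. apply f_hom. Qed.

Lemma f_braid_eq a b : in_Sigma n a -> in_Sigma n b -> braid_eq n a b -> f a = f b.
Proof. apply f_hom. Qed.

Lemma fdelta_rel i j : i < j -> j <= n -> fdelta 1 * (fdelta j * fdelta i) = fdelta (S i) * fdelta j.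
Proof.
  intros Hij Hj. unfold fdelta.
  assert (HS : forall k, k <= n -> in_Sigma n (delta k)) by (intros; apply in_Sigma_delta; lia).
  rewrite <- !f_app by (try apply in_Sigma_app; apply HS; lia).
  apply f_braid_eq; [repeat apply in_Sigma_app; apply HS; lia ..|].
  apply delta_rel; lia.
Qed.

Lemma fdelta_fsigma i : 1 <= i -> fdelta (i - 1) * fsigma i = fdelta i.
Proof. intro. apply mulKVg. Qed.

Lemma fdelta_shift i j : i < j -> j <= n ->
  fdelta j * fdelta i = ((fdelta 1)^-1 * fdelta (S i)) * fdelta j.
Proof. intros. rewrite <- gmulA, <- fdelta_rel by lia. symmetry. apply mulKg. Qed.

Lemma fdelta_fsigma_shift i j : 1 <= i -> i < j -> j <= n ->
  fdelta j * fsigma i = fsigma (S i) * fdelta j.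
Proof.
  intros Hi Hij Hj.
  set (e k := (fdelta 1)^-1 * fdelta (S k)).
  assert (Hsplit : fdelta j * fsigma i = (e (i - 1))^-1 * (fdelta j * fdelta i)).
  { apply (mulgI H (e (i - 1))). rewrite mulKVg. unfold fsigma.
    rewrite gmulA, <- (fdelta_shift (i - 1)) by lia. rewrite <- gmulA, mulKVg. reflexivity. }
  rewrite Hsplit, fdelta_shift by lia. rewrite gmulA. f_equal.
  unfold e, fsigma. replace (S (i - 1)) with i by lia. rewrite invMg, invgK.
  rewrite <- gmulA, mulKVg. simpl. rewrite Nat.sub_0_r. reflexivity.
Qed.

Lemma fsigma_comm i j : 1 <= i -> i + 2 <= j -> j <= n ->
  fsigma i * fsigma j = fsigma j * fsigma i.
Proof.
  intros Hi Hij Hj.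
  assert (Hconj : fsigma i * (fdelta (j - 1))^-1 = (fdelta (j - 1))^-1 * fsigma (S i)).
  { apply (mulgI H (fdelta (j - 1))). rewrite mulKVg, gmulA, fdelta_fsigma_shift by lia.
    rewrite <- gmulA, mulgV. apply mulg1. }
  unfold fsigma at 2 4. fold (fdelta (j - 1)) (fdelta j).
  rewrite gmulA, Hconj, <- gmulA, <- fdelta_fsigma_shift by lia. apply gmulA.
Qed.

Lemma fdelta_fsigma_comm m k : m + 2 <= k -> k <= n ->
  fdelta m * fsigma k = fsigma k * fdelta m.
Proof.
  revert k. induction m as [|m IH]; intros k Hmk Hk.
  { rewrite fdelta0, gmul1. symmetry. apply mulg1. }
  rewrite <- (fdelta_fsigma (S m)) by lia. replace (S m - 1) with m by lia.
  rewrite <- gmulA, (fsigma_comm (S m) k) by lia. rewrite gmulA, IH by lia.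
  symmetry. apply gmulA.
Qed.

Lemma fsigma_braid i : 1 <= i -> i + 1 <= n ->
  fsigma i * (fsigma (S i) * fsigma i) = fsigma (S i) * (fsigma i * fsigma (S i)).
Proof.
  intros Hi Hin.
  pose proof (fdelta_fsigma_shift i (S i) Hi ltac:(lia) ltac:(lia)) as Hshift.
  assert (Hexp : fdelta (S i) = (fdelta (i - 1) * fsigma i) * fsigma (S i)).
  { rewrite fdelta_fsigma, <- (fdelta_fsigma (S i)) by lia. do 2 f_equal. lia. }
  rewrite Hexp in Hshift.
  apply (mulgI H (fdelta (i - 1))).
  transitivity (((fdelta (i - 1) * fsigma i) * fsigma (S i)) * fsigma i).
  { rewrite !gmulA. reflexivity. }
  rewrite Hshift, !gmulA, <- (fdelta_fsigma_comm (i - 1) (S i)) by lia. reflexivity.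
Qed.

Definition fletter (l : letter) : H :=
  if (1 <=? fst l) && (fst l <=? n)
  then (if snd l then fsigma (fst l) else (fsigma (fst l))^-1)
  else gone H.

Definition fword (w : word) : H := fold_right (fun l acc => fletter l * acc) (gone H) w.

Lemma fword_app u v : fword (u ++ v) = fword u * fword v.
Proof. induction u as [|l u IH]; simpl; [symmetry; apply gmul1 | rewrite IH; apply gmulA]. Qed.

Lemma fword_letter i b : 1 <= i <= n ->
  fword [(i, b)] = if b then fsigma i else (fsigma i)^-1.
Proof.
  intro Hi. simpl. rewrite mulg1. unfold fletter. cbn [fst snd].
  replace (1 <=? i) with true by (symmetry; apply Nat.leb_le; lia).
  replace (i <=? n) with true by (symmetry; apply Nat.leb_le; lia).
  reflexivity.
Qed.

Lemma fword_braid_eq u v : braid_eq n u v -> fword u = fword v.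
Proof.
  induction 1 as [| | |u v w1 w2 _ IH|i b Hi|i j Hi Hj Hij|i Hi Hin].
  - reflexivity.
  - symmetry; assumption.
  - etransitivity; eassumption.
  - rewrite !fword_app, IH. reflexivity.
  - change [(i, b); (i, negb b)] with ([(i, b)] ++ [(i, negb b)]).
    rewrite fword_app, !fword_letter by lia.
    destruct b; [apply mulgV | apply gmulV].
  - change [sig i; sig j] with ([(i, true)] ++ [(j, true)]).
    change [sig j; sig i] with ([(j, true)] ++ [(i, true)]).
    rewrite !fword_app, !fword_letter by lia. apply fsigma_comm; lia.
  - change [sig i; sig (i + 1); sig i] with ([(i, true)] ++ [(i + 1, true)] ++ [(i, true)]).
    change [sig (i + 1); sig i; sig (i + 1)]
      with ([(i + 1, true)] ++ [(i, true)] ++ [(i + 1, true)]).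
    rewrite !fword_app, !fword_letter by lia.
    replace (i + 1) with (S i) by lia. apply fsigma_braid; lia.
Qed.

Lemma fword_delta k : k <= n -> fword (delta k) = f (delta k).
Proof.
  induction k as [|k IH]; intros Hk. { symmetry; apply fdelta0. }
  rewrite delta_S at 1. unfold sig. rewrite fword_app, IH, fword_letter by lia.
  fold (fdelta k) (fdelta (S k)). rewrite <- (fdelta_fsigma (S k)) by lia.
  do 2 f_equal. lia.
Qed.

Lemma fword_deltas ks : Forall (fun k => 1 <= k <= n) ks ->
  fword (concat (map delta ks)) = f (concat (map delta ks)).
Proof.
  induction 1 as [|k ks Hk Fks IH]; simpl. { symmetry; apply fdelta0. }
  rewrite fword_app, f_app, IH, fword_delta
    by first [lia | apply in_Sigma_delta; lia | apply in_Sigma_deltas; exact Fks].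
  reflexivity.
Qed.

Lemma fword_extends : braid_hom n H fword /\ forall a, in_Sigma n a -> fword a = f a.
Proof.
  split; [split; intros; [apply fword_braid_eq | apply fword_app]; assumption|].
  intros a Ha. pose proof Ha as [ks [F E]].
  rewrite (fword_braid_eq _ _ E), fword_deltas by exact F.
  symmetry. apply f_braid_eq; [exact Ha | apply in_Sigma_deltas; exact F | exact E].
Qed.

End Extension.

Section BraidHomUniqueness.
Variables (n : nat) (H : group).
Local Notation "x * y" := (gmul H x y).
Local Notation "x ^-1" := (ginv H x) (at level 3).

Lemma valid_letter i b : 1 <= i <= n -> valid n [(i, b)].
Proof. intro Hi. constructor; [exact Hi | constructor]. Qed.

Lemma braid_hom_nil g : braid_hom n H g -> g [] = gone H.
Proof.
  intros [_ g_app]. apply (mulIg H (g [])).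
  rewrite <- g_app by constructor. symmetry. apply gmul1.
Qed.

Lemma braid_hom_inv_letter g i : braid_hom n H g -> 1 <= i <= n ->
  g [(i, false)] = (g [sig i])^-1.
Proof.
  intros Hg Hi. apply mulg_eq1_inv. pose proof Hg as [g_eq g_app].
  rewrite <- g_app, <- (braid_hom_nil g Hg) by (apply valid_letter; exact Hi).
  apply g_eq; [apply valid_app; apply valid_letter; exact Hi | constructor |].
  apply (be_free n i false). exact Hi.
Qed.

Lemma braid_hom_ext g1 g2 : braid_hom n H g1 -> braid_hom n H g2 ->
  (forall i, 1 <= i <= n -> g1 [sig i] = g2 [sig i]) ->
  forall u, valid n u -> g1 u = g2 u.
Proof.
  intros Hg1 Hg2 Hsig. induction u as [|[i b] u IH]; intros Vu.
  { rewrite (braid_hom_nil g1), (braid_hom_nil g2); auto. }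
  inversion Vu as [|? ? Hi Vu']; subst; simpl in Hi.
  change ((i, b) :: u) with ([(i, b)] ++ u).
  rewrite (proj2 Hg1), (proj2 Hg2), IH by (exact Vu' || apply valid_letter; exact Hi).
  f_equal. destruct b; [apply Hsig; exact Hi|].
  rewrite !braid_hom_inv_letter, Hsig; auto.
Qed.

Lemma braid_hom_sig (f : word -> H) g i : braid_hom n H g ->
  (forall a, in_Sigma n a -> g a = f a) -> 1 <= i <= n -> g [sig i] = fsigma H f i.
Proof.
  intros [_ g_app] Hgf Hi. unfold fsigma.
  assert (Hdelta : delta i = delta (i - 1) ++ [sig i]).
  { replace i with (S (i - 1)) at 1 by lia. rewrite delta_S. do 3 f_equal. lia. }
  rewrite <- !Hgf by (apply in_Sigma_delta; lia).
  rewrite Hdelta, g_app by (apply valid_delta || apply valid_letter; lia).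
  symmetry. apply mulKg.
Qed.

End BraidHomUniqueness.

Theorem proposition5p5 (n : nat) (hn : 1 <= n) :
  Sigma_is_Ore n /\ inclusion_is_group_of_fractions n.
Proof.
  split; [exact (Sigma_Ore n hn)|].
  intros H f f_hom. split.
  - exists (fword n H f). exact (fword_extends n H f f_hom).
  - intros g1 g2 Hg1 Hg2 Hg1f Hg2f. apply braid_hom_ext; [exact Hg1 | exact Hg2 |].
    intros i Hi. rewrite (braid_hom_sig n H f g1), (braid_hom_sig n H f g2); auto.
Qed.
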